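(* Let $\mathcal A$ be a commutative unital algebra, $L\in\operatorname{End}(\mathcal A)$, $R\in\operatorname{End}(\mathcal A)$ a linear map (renormalization scheme), and let $\phi=\phi_L\colon H_R\to\mathcal A$ be the unique unital algebra morphism with $\phi_L\circ B_+=L\circ\phi_L$. Let $\phi_-$, $\phi_+$, $\bar\phi$ be the counterterm, renormalized map and Bogoliubov map of $\phi$ with respect to $R$. Suppose $L$ is linear over the counterterms, i.e. $L(\phi_-(h)\,a)=\phi_-(h)\,L(a)$ for all $h\in H_R$, $a\in\mathcal A$. Then $$\bar\phi\circ B_+=L\circ\phi_+ .$$
   Context: $H_R$ is the Connes–Kreimer Hopf algebra of rooted trees over a field $\mathbb K$ of characteristic zero: the free commutative algebra on rooted trees, with basis the rooted forests, unit the empty forest $\mathbb 1$, grading by number of nodes; $B_+$ grafts all trees of a forest onto a new root; the coproduct $\Delta$ is the unique algebra morphism with $\Delta(\mathbb 1)=\mathbb 1\otimes\mathbb 1$ and $\Delta\circ B_+=B_+\otimes\mathbb 1+(\mathrm{id}\otimes B_+)\circ\Delta$; the counit $\varepsilon$ vanishes on all nonempty forests. For linear maps $\psi,\chi\colon H_R\to\mathcal A$, the convolution is $\psi\star\chi=m_{\mathcal A}\circ(\psi\otimes\chi)\circ\Delta$. Writing $\tilde\Delta(x)=\Delta(x)-\mathbb 1\otimes x-x\otimes\mathbb 1=\sum x'\otimes x''$, the counterterm $\phi_-\colon H_R\to\mathcal A$ is the linear map with $\phi_-(\mathbb 1)=1$ and, recursively on degree, $\phi_-(x)=-R\big(\phi(x)+\sum\phi_-(x')\phi(x'')\big)$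 for $x$ of positive degree; then $\phi_+:=\phi_-\star\phi$ and $\bar\phi:=\phi_-\star\phi-\phi_-$. *)

(* Connes-Kreimer Hopf algebra of rooted trees, presented on
   its basis of rooted forests. *)
From HB Require Import structures.
From mathcomp Require Import all_boot all_order all_algebra.
Set Implicit Arguments. Unset Strict Implicit. Unset Printing Implicit Defensive.
Import GRing.Theory.
Local Open Scope ring_scope.

(* Non-planarity (commutativity of H_R) is
   accounted for by the fact that all maps below take values in a
   commutative algebra, so they are invariant under reordering. *)
Inductive tree : Type := Node of seq tree.
Definition forest := seq tree.

Definition Bplus (f : forest) : forest := [:: Node f].

(* Elements of H_R (x) H_R given as formal sums of basis tensors, i.e. lists
   of pairs of forests (each with coefficient 1, repeated as needed). *)
Definition tens := seq (forest * forest).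

Definition mul_tens (s t : tens) : tens :=
  [seq (p.1 ++ q.1, p.2 ++ q.2) | p <- s, q <- t].

(* coproduct of a tree: Delta(B_+ f) = B_+ f (x) 1 + (id (x) B_+) Delta(f),
   with Delta multiplicative and Delta(1) = 1 (x) 1 *)
Fixpoint coprod_tree (t : tree) : tens :=
  match t with
  | Node f =>
    let fix coprod_f (f : forest) : tens :=
        match f with
        | [::] => [:: ([::], [::])]
        | t' :: f' => mul_tens (coprod_tree t') (coprod_f f')
        end in
    (Bplus f, [::]) :: [seq (p.1, Bplus p.2) | p <- coprod_f f]
  end.

Definition coprod (f : forest) : tens :=
  foldr (fun t acc => mul_tens (coprod_tree t) acc) [:: ([::], [::])] f.

(* reduced coproduct: Delta(x) - 1 (x) x - x (x) 1, for x of positive degree.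
   The terms 1 (x) x and x (x) 1 are exactly the pairs with an empty side. *)
Definition rcoprod (f : forest) : tens :=
  [seq p <- coprod f | ~~ nilp p.1 && ~~ nilp p.2].

Fixpoint tree_size (t : tree) : nat :=
  match t with
  | Node f =>
    let fix fs (f : forest) : nat :=
        match f with [::] => 0%N | t' :: f' => (tree_size t' + fs f')%N end in
    (fs f).+1
  end.
Definition forest_size (f : forest) : nat := sumn (map tree_size f).

Section Feynman.
Variables (K : fieldType) (A : comAlgType K).

Fixpoint phiL_tree (L : A -> A) (t : tree) : A :=
  match t with
  | Node f =>
    let fix pf (f : forest) : A :=
        match f with [::] => 1 | t' :: f' => phiL_tree L t' * pf f' end in
    L (pf f)
  end.
Definition phiL (L : A -> A) (f : forest) : A :=
  \prod_(t <- f) phiL_tree L t.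

Definition conv (psi chi : forest -> A) (x : forest) : A :=
  \sum_(p <- coprod x) psi p.1 * chi p.2.

(* counterterm, by recursion on degree (n is fuel >= degree) *)
Fixpoint cterm_aux (R : A -> A) (phi : forest -> A) (n : nat) (x : forest) : A :=
  match n with
  | 0 => 1
  | n'.+1 =>
    if x is [::] then 1
    else - R (phi x + \sum_(p <- rcoprod x) cterm_aux R phi n' p.1 * phi p.2)
  end.
Definition counterterm (R : A -> A) (phi : forest -> A) (x : forest) : A :=
  cterm_aux R phi (forest_size x) x.

Definition renormalized (R : A -> A) (phi : forest -> A) : forest -> A :=
  conv (counterterm R phi) phi.

Definition bogoliubov (R : A -> A) (phi : forest -> A) (x : forest) : A :=
  renormalized R phi x - counterterm R phi x.

End Feynman.

From HB Require Import structures.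
From mathcomp Require Import all_boot all_order all_algebra.
Import GRing.Theory.
Local Open Scope ring_scope.

(* The coproduct recursion
     Delta (B_+ f) = B_+ f (x) 1 + (id (x) B_+) Delta f
   turns, for any two maps psi, chi, into the convolution identity
     (psi * chi)(B_+ f) = psi(B_+ f) chi(1) + sum_(f) psi(f') chi(B_+ f'').
   Taking psi = phi_- and chi = phi_L, where phi_L(1) = 1 and
   phi_L o B_+ = L o phi_L, the first term is exactly phi_-(B_+ f), so
     bar phi (B_+ f) = sum_(f) phi_-(f') L (phi_L f'').
   Since L is linear and commutes with multiplication by counterterm values,
   this sum equals L (sum_(f) phi_-(f') phi_L(f'')) = L (phi_+ f). *)

Lemma mul_tens1 (s : tens) : mul_tens s [:: ([::], [::])] = s.
Proof. by rewrite /mul_tens; elim: s => [|[a b] s IH] //=; rewrite !cats0 IH. Qed.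

Lemma coprod_Bplus (f : forest) :
  coprod (Bplus f) = (Bplus f, [::]) :: [seq (p.1, Bplus p.2) | p <- coprod f].
Proof. by rewrite /coprod /= mul_tens1. Qed.

Section Convolution.
Variables (K : fieldType) (A : comAlgType K).

Lemma conv_Bplus (psi chi : forest -> A) (f : forest) :
  conv psi chi (Bplus f) =
  psi (Bplus f) * chi [::] + \sum_(p <- coprod f) psi p.1 * chi (Bplus p.2).
Proof. by rewrite /conv coprod_Bplus big_cons big_map. Qed.

Lemma phiL_nil (L : A -> A) : phiL L [::] = 1.
Proof. exact: big_nil. Qed.

Lemma phiL_Bplus (L : A -> A) (f : forest) : phiL L (Bplus f) = L (phiL L f).
Proof.
rewrite /phiL /Bplus big_seq1 /=; congr (L _).
by elim: f => [|t f IH] /=; rewrite ?big_nil ?big_cons ?IH.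
Qed.

End Convolution.

Theorem mainTheorem3 (K : fieldType) (charK0 : [pchar K] =i pred0)
  (A : comAlgType K) (L R : {linear A -> A})
  (hL : forall (h : forest) (a : A),
      L (counterterm R (phiL L) h * a) = counterterm R (phiL L) h * L a) :
  forall f : forest,
    bogoliubov R (phiL L) (Bplus f) = L (renormalized R (phiL L) f).
Proof.
move=> f; rewrite /bogoliubov /renormalized conv_Bplus phiL_nil mulr1.
(* the counterterm term cancels, leaving the sum over the coproduct of f *)
rewrite addrAC subrr add0r /conv linear_sum.
by apply: eq_bigr => p _; rewrite phiL_Bplus hL.
Qed.
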